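(* For every integer $p>1$ and every $N\in\mathbb N$, the group $\mathrm{GL}_{p-rec}(\mathbb C)$ contains an element $G$ of complexity $2$ whose inverse $G^{-1}$ has complexity $\ge N$.
   Context: $\mathcal M_{p\times p}$ is the monoid of pairs $(U,W)$ of words of common length over $\{0,\dots,p-1\}$ (concatenation). For $A:\mathcal M_{p\times p}\to\mathbb C$ (values $A[U,W]$), shift maps act by $(\rho(S,T)A)[U,W]=A[US,WT]$; the complexity of $A$ is the dimension of the linear span of $\{\rho(S,T)A\}$, and $\mathrm{Rec}_{p\times p}(\mathbb C)$ is the set of $A$ of finite complexity. It is an algebra for the product $(AB)[U,W]=\sum_{V\in\{0,\dots,p-1\}^l}A[U,V]B[V,W]$ ($(U,W)$ of length $l$), with identity $\mathrm{Id}[U,W]=1$ if $U=W$ and $0$ otherwise. $\mathrm{GL}_{p-rec}(\mathbb C)$ is the group of elements of $\mathrm{Rec}_{p\times p}(\mathbb C)$ invertible in $\mathrm{Rec}_{p\times p}(\mathbb C)$. *)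

From HB Require Import structures.
From mathcomp Require Import all_boot all_order all_algebra.
From mathcomp Require Import reals.
From mathcomp Require Import complex.
Set Implicit Arguments. Unset Strict Implicit. Unset Printing Implicit Defensive.
Import Order.TTheory GRing.Theory Num.Theory.
Local Open Scope ring_scope.

Definition Cplx (R : realType) : Type := (R[i])%C.

Definition word (p : nat) := seq 'I_p.

(* Functions on M_{pxp}: only values on pairs (U,W) with size U = size W matter. *)
Definition mfun (R : realType) (p : nat) := word p -> word p -> Cplx R.

Section Defs.
Variables (R : realType) (p : nat).
Local Notation mf := (mfun R p).

Definition eqM (A B : mf) : Prop :=
  forall U W : word p, size U = size W -> A U W = B U W.

Definition shift (S T : word p) (A : mf) : mf := fun U W => A (U ++ S) (W ++ T).

Definition lincomb (n : nat) (c : 'I_n -> Cplx R) (F : 'I_n -> mf) : mf :=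
  fun U W => \sum_(i < n) c i * F i U W.

Definition zero_mf : mf := fun _ _ => 0.

Definition lin_indep (n : nat) (F : 'I_n -> mf) : Prop :=
  forall c : 'I_n -> Cplx R, eqM (lincomb c F) zero_mf -> forall i, c i = 0.

Definition in_span (n : nat) (A : mf) (F : 'I_n -> mf) : Prop :=
  exists c : 'I_n -> Cplx R, eqM A (lincomb c F).

(* A has complexity n: the span of {rho(S,T) A} has dimension n, i.e. it has a
   basis of n shifts of A (a spanning family of vectors contains a basis). *)
Definition has_complexity (A : mf) (n : nat) : Prop :=
  exists ST : 'I_n -> word p * word p,
    (forall i, size (ST i).1 = size (ST i).2) /\
    lin_indep (fun i => shift (ST i).1 (ST i).2 A) /\
    (forall S T : word p, size S = size T ->
       in_span (shift S T A) (fun i => shift (ST i).1 (ST i).2 A)).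

Definition is_rec (A : mf) : Prop := exists n, has_complexity A n.

Definition mulM (A B : mf) : mf :=
  fun U W => \sum_(V : (size U).-tuple 'I_p) A U (tval V) * B (tval V) W.

Definition idM : mf := fun U W => if U == W then 1 else 0.

Definition is_rec_inverse (G H : mf) : Prop :=
  is_rec G /\ is_rec H /\ eqM (mulM G H) idM /\ eqM (mulM H G) idM.

End Defs.

From mathcomp Require Import all_boot all_algebra reals complex.
From mathcomp Require Import ring.
Set Implicit Arguments. Unset Strict Implicit. Unset Printing Implicit Defensive.
Import GRing.Theory Num.Theory.
Local Open Scope ring_scope.

(* Fix a letter and a primitive M-th root of unity w, with M = 2^(N+1), and
   let G be diagonal with G[U,U] = 2 - w^m, m the number of occurrences of the
   letter in U.  A shift rho(S,T) kills a diagonal function unless S = T, and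
   rho(S,S) shifts its sequence by the number of occurrences in S, so the
   complexity of a diagonal function is the dimension of the span of the
   shifts of its sequence.  For 2 - w^m this span is spanned by 1 and w^m.
   The inverse of G is diagonal with entries 1/(2 - w^m), which expand as
   sum_k a_k w^(mk) with every a_k nonzero (a geometric series in w^m / 2);
   hence, by Fourier inversion on Z/M, its first M shifts are independent. *)

Lemma exp2_eqN1_prim_root (F : numDomainType) (z : F) k :
  z ^+ (2 ^ k) = -1 -> (2 ^ k.+1).-primitive_root z.
Proof.
move=> zN1; have z1 : z ^+ (2 ^ k.+1) = 1.
  by rewrite expnSr exprM zN1 sqrrN expr1n.
have [m prim_m /(dvdn_pfactor _ _ (isT : prime 2)) [j le_jk def_m]] :=
  prim_order_exists (expn_gt0 2 k.+1) z1.
rewrite def_m in prim_m; case: ltngtP le_jk => // [lt_jk _ | <- //].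
by have := prim_order_dvd prim_m (2 ^ k); rewrite dvdn_exp2l // zN1 eqNr oner_eq0.
Qed.

Section IteratedSquareRoots.
Variable F : numClosedFieldType.

Fixpoint iter_sqrtN1 (k : nat) : F :=
  if k is k'.+1 then sqrtC (iter_sqrtN1 k') else -1.

Lemma iter_sqrtN1_exp2 k : iter_sqrtN1 k ^+ (2 ^ k) = -1.
Proof. by elim: k => [|k IHk] /=; rewrite ?expr1 // expnS exprM sqrtCK. Qed.

Lemma iter_sqrtN1_prim_root k : (2 ^ k.+1).-primitive_root (iter_sqrtN1 k).
Proof. exact/exp2_eqN1_prim_root/iter_sqrtN1_exp2. Qed.

End IteratedSquareRoots.

Section Fourier.
Variables (F : numFieldType) (M : nat) (z : F).
Hypothesis prim_z : M.-primitive_root z.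

Lemma sum_unity_root_expr (x : F) :
  x ^+ M = 1 -> \sum_(i < M) x ^+ i = if x == 1 then M%:R else 0.
Proof.
move=> xM1; have [->|x_neq1] := eqVneq x 1.
  by under eq_bigr do rewrite expr1n; rewrite sumr_const card_ord.
have /eqP := subrX1 x M; rewrite xM1 subrr eq_sym mulf_eq0 subr_eq0.
by rewrite (negbTE x_neq1) => /eqP.
Qed.

Lemma dft_inj (d : 'I_M -> F) :
  (forall m : 'I_M, \sum_(k < M) d k * z ^+ (m * k) = 0) -> forall j, d j = 0.
Proof.
move=> dft0 j; have M_gt0 := prim_order_gt0 prim_z.
have z_neq0 : z != 0 by rewrite (prim_root_eq0 prim_z) -lt0n.
pose w (k : 'I_M) := z ^+ k / z ^+ j.
have wM1 k : w k ^+ M = 1.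
  rewrite expr_div_n -!exprM !(mulnC _ M) !exprM (prim_expr_order prim_z).
  by rewrite !expr1n divr1.
have w_eq1 k : (w k == 1) = (k == j).
  apply/eqP/eqP => [/divr1_eq /eqP|-> ]; last by rewrite /w divff ?expf_neq0.
  by rewrite (eq_prim_root_expr prim_z) !modn_small // => /eqP/val_inj.
have : \sum_(m < M) (z ^+ j)^-1 ^+ m * \sum_(k < M) d k * z ^+ (m * k) = 0.
  by rewrite big1 // => m _; rewrite dft0 mulr0.
have -> : \sum_(m < M) (z ^+ j)^-1 ^+ m * \sum_(k < M) d k * z ^+ (m * k)
        = \sum_(k < M) d k * \sum_(m < M) w k ^+ m.
  under eq_bigr do rewrite mulr_sumr; rewrite exchange_big /=.
  apply: eq_bigr => k _; rewrite mulr_sumr; apply: eq_bigr => m _.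
  by rewrite /w expr_div_n -exprM mulnC exprVn mulrCA [_^-1 * _]mulrC.
under eq_bigr => k _ do rewrite sum_unity_root_expr // w_eq1.
rewrite (bigD1 j) //= eqxx big1 => [|k /negbTE->]; last by rewrite mulr0.
rewrite addr0 => /eqP.
by rewrite mulf_eq0 pnatr_eq0 gtn_eqF // orbF => /eqP.
Qed.

End Fourier.

Definition seq_complexity (F : fieldType) (D : nat -> F) (n : nat) : Prop :=
  (forall c : 'I_n -> F,
     (forall m, \sum_(i < n) c i * D (m + i)%N = 0) -> forall i, c i = 0) /\
  (forall j, exists c : 'I_n -> F,
     forall m, D (m + j)%N = \sum_(i < n) c i * D (m + i)%N).

Lemma seq_complexity_sub_expr (F : fieldType) (a z : F) :
  a != 0 -> z != 1 -> seq_complexity (fun m => a - z ^+ m) 2.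
Proof.
move=> a_neq0 z_neq1; have z1_neq0 : z - 1 != 0 by rewrite subr_eq0.
split=> [c c_free|j].
  set c0 := c ord0; set c1 := c (lift ord0 ord0).
  have c_eq0 m : c0 * (a - z ^+ m) + c1 * (a - z ^+ m.+1) = 0.
    by have := c_free m; rewrite !big_ord_recl big_ord0 addr0 /= addn0 addn1.
  have eq0 := c_eq0 0%N; have eq1 := c_eq0 1%N; rewrite expr0 expr1 in eq0 eq1.
  have c1_0 : c1 = 0.
    have : c1 * (a * (z - 1) ^+ 2) = (a - z) * (c0 * (a - 1) + c1 * (a - z))
                                     - (a - 1) * (c0 * (a - z) + c1 * (a - z ^+ 2)).
      by ring.
    rewrite eq0 eq1 !mulr0 subrr => /eqP.
    by rewrite !mulf_eq0 (negbTE a_neq0) (negbTE z1_neq0) !orbF => /eqP.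
  have c0_0 : c0 = 0.
    have : c0 * (z - 1) = (c0 * (a - 1) + c1 * (a - z))
                          - (c0 * (a - z) + c1 * (a - z ^+ 2)).
      by rewrite c1_0; ring.
    by rewrite eq0 eq1 subrr => /eqP; rewrite mulf_eq0 (negbTE z1_neq0) orbF => /eqP.
  by case=> [[|[|//]] lt_i2]; [rewrite -[RHS]c0_0 | rewrite -[RHS]c1_0];
    congr c; apply: val_inj.
pose b := (z ^+ j - 1) / (z - 1).
exists (fun i : 'I_2 => if i == ord0 then 1 - b else b) => m.
rewrite !big_ord_recl big_ord0 addr0 /= addn0 addn1 exprS exprD /b.
by field.
Qed.

Section InverseOfSubPrimRoot.
Variables (F : numFieldType) (M : nat) (z a : F).
Hypotheses (prim_z : M.-primitive_root z) (a_neq0 : a != 0) (aM_neq1 : a ^+ M != 1).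

Lemma sub_prim_root_expr_neq0 m : a - z ^+ m != 0.
Proof.
rewrite subr_eq0; apply: contra aM_neq1 => /eqP->.
by rewrite exprAC (prim_expr_order prim_z) expr1n.
Qed.

Lemma inv_sub_prim_root_expr m :
  (a - z ^+ m)^-1 = \sum_(k < M) a ^+ (M.-1 - k) / (a ^+ M - 1) * z ^+ (m * k).
Proof.
have aM1 : a ^+ M - 1 = (a - z ^+ m) * \sum_(k < M) a ^+ (M.-1 - k) * (z ^+ m) ^+ k.
  by rewrite -subrXX exprAC (prim_expr_order prim_z) expr1n.
have -> : \sum_(k < M) a ^+ (M.-1 - k) / (a ^+ M - 1) * z ^+ (m * k)
          = (\sum_(k < M) a ^+ (M.-1 - k) * (z ^+ m) ^+ k) / (a ^+ M - 1).
  by rewrite mulr_suml; apply: eq_bigr => k _; rewrite exprM mulrAC.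
have : a ^+ M - 1 != 0 by rewrite subr_eq0.
rewrite aM1 mulf_eq0 negb_or => /andP[_ sum_neq0].
by field; rewrite sum_neq0 sub_prim_root_expr_neq0.
Qed.

Lemma seq_complexity_inv_sub_prim_root :
  seq_complexity (fun m => (a - z ^+ m)^-1) M.
Proof.
have M_gt0 := prim_order_gt0 prim_z.
split=> [c c_free|j]; last first.
  pose jM := Ordinal (ltn_pmod j M_gt0).
  exists (fun i => (i == jM)%:R) => m.
  rewrite (bigD1 jM) //= eqxx mul1r big1 => [|i /negbTE->]; last by rewrite mul0r.
  by rewrite addr0 !exprD (prim_expr_mod prim_z).
pose b k := a ^+ (M.-1 - k) / (a ^+ M - 1).
have b_neq0 k : b k != 0.
  by rewrite mulf_neq0 ?expf_neq0 ?invr_eq0 ?subr_eq0.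
have dft_c : forall k : 'I_M, b k * \sum_(s < M) c s * z ^+ (s * k) = 0.
  apply: (dft_inj prim_z) => m.
  rewrite -[RHS](c_free m).
  under [RHS]eq_bigr do rewrite inv_sub_prim_root_expr mulr_sumr.
  rewrite exchange_big /=; apply: eq_bigr => k _.
  rewrite -mulrA mulr_suml mulr_sumr; apply: eq_bigr => s _.
  by rewrite /b mulnDl exprD; ring.
apply: (dft_inj prim_z) => k; have /eqP := dft_c k.
rewrite mulf_eq0 (negbTE (b_neq0 k)) /= => /eqP dft_ck.
by rewrite -[RHS]dft_ck; apply: eq_bigr => s _; rewrite mulnC.
Qed.

End InverseOfSubPrimRoot.

Section CountingDiagonals.
Variables (R : realType) (p : nat) (x : 'I_p).

Definition diagM (D : nat -> Cplx R) : mfun R p :=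
  fun U W => if U == W then D (count_mem x U) else 0.

Lemma count_mem_nseq n : count_mem x (nseq n x) = n.
Proof. by rewrite count_nseq /= eqxx mul1n. Qed.

Lemma shift_diagM D (S T U W : word p) : size S = size T -> size U = size W ->
  shift S T (diagM D) U W =
  if S == T then diagM (fun m => D (m + count_mem x S)%N) U W else 0.
Proof.
move=> eq_ST eq_UW; rewrite /shift /diagM eqseq_cat //.
by case: eqVneq => [->|_]; case: eqVneq => //= _; rewrite count_cat.
Qed.

Lemma has_complexity_diagM D n : seq_complexity D n -> has_complexity (diagM D) n.
Proof.
have shift_nseq i U W : size U = size W ->
    shift (nseq i x) (nseq i x) (diagM D) U W = diagM (fun m => D (m + i)%N) U W.
  by move=> eq_UW; rewrite shift_diagM ?eqxx ?count_mem_nseq.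
move=> [D_free D_span]; exists (fun i => (nseq i x, nseq i x)); split=> //; split.
  move=> c c0; apply: D_free => m; have := c0 (nseq m x) (nseq m x) erefl.
  rewrite /lincomb /zero_mf => c0m; rewrite -[RHS]c0m; apply: eq_bigr => i _.
  by rewrite shift_nseq // /diagM eqxx count_mem_nseq.
move=> S T eq_ST; case: (eqVneq S T) => [<-|neq_ST].
  have [c Dc] := D_span (count_mem x S); exists c => U W eq_UW.
  rewrite /lincomb shift_diagM // eqxx /diagM; case: eqVneq => [<-|neq_UW].
    by rewrite Dc; apply: eq_bigr => i _; rewrite shift_nseq // /diagM eqxx.
  by rewrite big1 // => i _; rewrite shift_nseq // /diagM (negbTE neq_UW) mulr0.
exists (fun _ => 0) => U W eq_UW.
by rewrite /lincomb shift_diagM // (negbTE neq_ST) big1 // => i _; rewrite mul0r.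
Qed.

Lemma mulM_diagM D E (U W : word p) :
  mulM (diagM D) (diagM E) U W = diagM (fun m => D m * E m) U W.
Proof.
rewrite /mulM (bigD1 (in_tuple U)) //= big1 => [|V V_neq_U].
  by rewrite /diagM eqxx addr0; case: eqVneq; rewrite ?mulr0.
rewrite /diagM; case: eqVneq => [U_eq_V|]; last by rewrite mul0r.
by rewrite -val_eqE /= -U_eq_V eqxx in V_neq_U.
Qed.

Lemma is_rec_inverse_diagM D n n' : (forall m, D m != 0) ->
  seq_complexity D n -> seq_complexity (fun m => (D m)^-1) n' ->
  is_rec_inverse (diagM D) (diagM (fun m => (D m)^-1)).
Proof.
move=> D_neq0 D_n Dinv_n'; split; first by exists n; apply: has_complexity_diagM.
split; first by exists n'; apply: has_complexity_diagM.
split=> U W _; rewrite mulM_diagM /diagM /idM.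
  by case: eqVneq; rewrite ?mulfV.
by case: eqVneq; rewrite ?mulVf.
Qed.

End CountingDiagonals.

Theorem mainTheorem12 (R : realType) (p : nat) (hp : (1 < p)%N) (N : nat) :
  exists G Ginv : mfun R p,
    is_rec_inverse G Ginv /\
    has_complexity G 2 /\
    exists n : nat, has_complexity Ginv n /\ (N <= n)%N.
Proof.
pose M := (2 ^ N.+1)%N; pose z : Cplx R := iter_sqrtN1 _ N.
have prim_z : M.-primitive_root z := iter_sqrtN1_prim_root _ N.
have M_gt1 : (1 < M)%N by rewrite -{1}(expn0 2) ltn_exp2l.
have z_neq1 : z != 1 by rewrite -[z]expr1 -(prim_order_dvd prim_z) dvdn1 gtn_eqF.
have two_neq0 : (2 : Cplx R) != 0 by rewrite pnatr_eq0.
have twoM_neq1 : (2 : Cplx R) ^+ M != 1.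
  have twoM_gt1 : (1 < 2 ^ M)%N := ltn_trans M_gt1 (ltn_expl M (isT : (1 < 2)%N)).
  by rewrite -natrX pnatr_eq1 gtn_eqF.
pose D m := 2 - z ^+ m.
exists (diagM (Ordinal hp) D), (diagM (Ordinal hp) (fun m => (D m)^-1)).
have D_2 : seq_complexity D 2 := seq_complexity_sub_expr two_neq0 z_neq1.
have Dinv_M := seq_complexity_inv_sub_prim_root prim_z two_neq0 twoM_neq1.
have D_neq0 := sub_prim_root_expr_neq0 prim_z twoM_neq1.
split; first exact: is_rec_inverse_diagM D_neq0 D_2 Dinv_M.
split; first exact: has_complexity_diagM.
exists M; split; first exact: has_complexity_diagM.
exact: ltnW (ltn_trans (ltnSn N) (ltn_expl N.+1 (isT : (1 < 2)%N))).
Qed.
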